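(* Let $\mathcal{A}$ and $\mathcal{B}$ be alternative $W^{*}$-factors with identities $1_{\mathcal{A}},1_{\mathcal{B}}$, with $\mathcal{A}$ containing a projection $p\notin\{0,1_{\mathcal{A}}\}$, and let $\Phi:\mathcal{A}\to\mathcal{B}$ be a bijection satisfying $\Phi(ab-ba^{*})=\Phi(a)\Phi(b)-\Phi(b)\Phi(a)^{*}$ for all $a,b\in\mathcal{A}$. Then either $\Phi(ia)=i\Phi(a)$ for all $a\in\mathcal{A}$, or $\Phi(ia)=-i\Phi(a)$ for all $a\in\mathcal{A}$.
   Context: An alternative $W^{*}$-factor is a prime alternative $C^{*}$-algebra (complete normed alternative complex $\ast$-algebra with $\|a^{*}a\|=\|a\|^{2}$, where alternative means $a^{2}b=a(ab)$, $ba^{2}=(ba)a$) that is a dual Banach space; it is unital with center $\mathbb{C}1$. A projection is a nonzero self-adjoint idempotent. *)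

From HB Require Import structures.
From mathcomp Require Import all_boot all_order all_algebra.
From mathcomp Require Import complex.
From mathcomp Require Import Rstruct.
Set Implicit Arguments. Unset Strict Implicit. Unset Printing Implicit Defensive.
Import Order.TTheory GRing.Theory Num.Theory.
Local Open Scope ring_scope.

Notation RR := Rdefinitions.R.
Notation CC := (complex Rdefinitions.R).

Definition cmod (c : CC) : RR := Normc.normc c.

(* It is unital (a standard fact, recorded in the context); the unit is part of
   the data. *)
Record AltWFactor := {
  wf_sort :> lmodType CC;
  wf_mul : wf_sort -> wf_sort -> wf_sort;
  wf_one : wf_sort;
  wf_star : wf_sort -> wf_sort;
  wf_norm : wf_sort -> RR;
  wf_mulDl : forall a b c, wf_mul (a + b) c = wf_mul a c + wf_mul b c;
  wf_mulDr : forall a b c, wf_mul a (b + c) = wf_mul a b + wf_mul a c;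
  wf_mulZl : forall (k : CC) a b, wf_mul (k *: a) b = k *: wf_mul a b;
  wf_mulZr : forall (k : CC) a b, wf_mul a (k *: b) = k *: wf_mul a b;
  wf_altl : forall a b, wf_mul (wf_mul a a) b = wf_mul a (wf_mul a b);
  wf_altr : forall a b, wf_mul b (wf_mul a a) = wf_mul (wf_mul b a) a;
  wf_mul1l : forall a, wf_mul wf_one a = a;
  wf_mul1r : forall a, wf_mul a wf_one = a;
  wf_starK : forall a, wf_star (wf_star a) = a;
  wf_starD : forall a b, wf_star (a + b) = wf_star a + wf_star b;
  wf_starZ : forall (k : CC) a, wf_star (k *: a) = (Num.conj k) *: wf_star a;
  wf_starM : forall a b, wf_star (wf_mul a b) = wf_mul (wf_star b) (wf_star a);
  wf_norm_ge0 : forall a, 0 <= wf_norm a;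
  wf_norm_eq0 : forall a, wf_norm a = 0 -> a = 0;
  wf_normD : forall a b, wf_norm (a + b) <= wf_norm a + wf_norm b;
  wf_normZ : forall (k : CC) a, wf_norm (k *: a) = cmod k * wf_norm a;
  wf_normM : forall a b, wf_norm (wf_mul a b) <= wf_norm a * wf_norm b;
  wf_normC : forall a, wf_norm (wf_mul (wf_star a) a) = wf_norm a ^+ 2;
  wf_complete : forall u : nat -> wf_sort,
      (forall e : RR, 0 < e -> exists N, forall m n, (N <= m)%N -> (N <= n)%N ->
          wf_norm (u m - u n) < e) ->
      exists l, forall e : RR, 0 < e -> exists N, forall n, (N <= n)%N ->
          wf_norm (u n - l) < e;
  wf_prime : forall I J : wf_sort -> Prop,
      (I 0 /\ (forall a b, I a -> I b -> I (a + b)) /\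
         (forall (k : CC) a, I a -> I (k *: a)) /\
         (forall a x, I a -> I (wf_mul x a) /\ I (wf_mul a x))) ->
      (J 0 /\ (forall a b, J a -> J b -> J (a + b)) /\
         (forall (k : CC) a, J a -> J (k *: a)) /\
         (forall a x, J a -> J (wf_mul x a) /\ J (wf_mul a x))) ->
      (forall a b, I a -> J b -> wf_mul a b = 0) ->
      (forall a, I a -> a = 0) \/ (forall b, J b -> b = 0);
  (* dual Banach space: A is isometrically isomorphic (via a linear bijection
     e) to the Banach dual X* of some complex normed space (X, nX); the norm of
     e a is the operator norm sup_{nX x <= 1} |e a x|. *)
  wf_dual : exists (X : lmodType CC) (nX : X -> RR) (e : wf_sort -> X -> CC),
      [/\ (forall x, 0 <= nX x) /\ (forall x, nX x = 0 -> x = 0) /\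
          (forall x y, nX (x + y) <= nX x + nX y) /\
          (forall (k : CC) x, nX (k *: x) = cmod k * nX x),
        (forall a, linear (e a)),
        (forall (k : CC) a b x, e (k *: a + b) x = k * e a x + e b x),
        (forall a, (forall x, nX x <= 1 -> cmod (e a x) <= wf_norm a) /\
           (forall M : RR, (forall x, nX x <= 1 -> cmod (e a x) <= M) ->
              wf_norm a <= M))
      & (forall f : X -> CC, linear f ->
           (exists M : RR, forall x, cmod (f x) <= M * nX x) ->
           exists a, forall x, e a x = f x)]
}.

Definition is_projection (A : AltWFactor) (p : A) :=
  [/\ p <> 0, wf_star p = p & wf_mul p p = p].

From HB Require Import structures.
From mathcomp Require Import all_boot all_order all_algebra.
From mathcomp Require Import complex.
From mathcomp Require Import ring Rstruct.
Set Implicit Arguments. Unset Strict Implicit. Unset Printing Implicit Defensive.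
Import GRing.Theory Num.Theory.
Local Open Scope ring_scope.

(* Write e := Phi ((i/2) 1); since [(i/2) 1, a] = i a, the map
   Psi := [e, _] satisfies Phi (i a) = Psi (Phi a).  Surjectivity of Phi
   shows that Psi intertwines the twisted commutator, and a polarization
   argument (comparing X with i X) turns this into Psi (X Y) = X (Psi Y) =
   (Psi X) Y: Psi is a "multiplier" of B.  The key general fact is a
   dichotomy for multipliers T of a prime algebra with T (T x) = k^2 x: the
   eigenspaces for k and -k are ideals annihilating each other, so one of
   them is zero and T = k or T = -k.  Applied to Psi o Psi (whose square is
   the identity, since i^4 = 1) it gives Psi o Psi = +-1; the case +1 forces
   Phi (-a) = Phi a, so A and B are trivial.  In the case -1 the dichotomy
   applied to Psi with k = i yields Psi = i or Psi = -i. *)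

Lemma conj_i : Num.conj ('i%C : CC) = - 'i%C.
Proof. by rewrite conjCi. Qed.

Lemma i_mul_i : ('i%C : CC) * 'i%C = -1.
Proof. by rewrite -expr2 sqr_i. Qed.

Lemma two_neq0 : (2 : CC) != 0.
Proof. by rewrite pnatr_eq0. Qed.

Lemma i_neq0 : ('i%C : CC) != 0.
Proof.
apply/eqP => i0; have := i_mul_i; rewrite i0 mul0r => /eqP.
by rewrite eq_sym oppr_eq0 oner_eq0.
Qed.

Lemma neq_opp (k : CC) : k != 0 -> k != - k.
Proof.
move=> k0; rewrite -subr_eq0 opprK -mulr2n -mulr_natr mulf_eq0 negb_or k0.
exact: two_neq0.
Qed.

Lemma eq_opp0 (V : lmodType CC) (v : V) : v = - v -> v = 0.
Proof.
move=> vN; have : (2 : CC) *: v = 0 by rewrite scaler_nat mulr2n {1}vN addNr.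
by move/eqP; rewrite scaler_eq0 (negbTE two_neq0) => /eqP.
Qed.

Lemma polarize (V : lmodType CC) (P Q a b : V) :
  P - Q = a - b -> P + Q = a + b -> P = a.
Proof.
move=> hB hD.
have dB : P - a = Q - b.
  by rewrite -[P](subrK Q) hB addrAC (addrAC a) subrr add0r addrC.
have dD : P - a = - (Q - b).
  by rewrite -[P](addrK Q) hD addrAC (addrAC a) subrr add0r opprB.
by apply/eqP; rewrite -subr_eq0; apply/eqP/eq_opp0; rewrite {2}dB.
Qed.

Lemma even_bijection_trivial (V W : lmodType CC) (f : V -> W) :
  bijective f -> (forall v, f (- v) = f v) -> forall w : W, w = 0.
Proof.
case=> g fK gK f_even.
have V0 (v : V) : v = 0 by apply/eq_opp0; rewrite -[RHS]fK f_even fK.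
by move=> w; rewrite -[w]gK -[0]gK (V0 (g w)) (V0 (g 0)).
Qed.

Section Multipliers.
Variable B : AltWFactor.
Local Notation "x ** y" := (@wf_mul B x y) (at level 40, left associativity).
Local Notation star := (@wf_star B).

Definition twisted (x y : B) : B := x ** y - y ** star x.

Definition multiplier (T : B -> B) :=
  [/\ forall x y, T (x + y) = T x + T y,
      forall (c : CC) x, T (c *: x) = c *: T x,
      forall x y, T (x ** y) = x ** T y
    & forall x y, T (x ** y) = T x ** y].

Definition ideal (I : B -> Prop) :=
  I 0 /\ (forall a b, I a -> I b -> I (a + b)) /\
  (forall (k : CC) a, I a -> I (k *: a)) /\
  (forall a x, I a -> I (x ** a) /\ I (a ** x)).

Lemma twistedDr (x y z : B) : twisted x (y + z) = twisted x y + twisted x z.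
Proof. by rewrite /twisted wf_mulDr wf_mulDl opprD addrACA. Qed.

Lemma twistedZr (c : CC) (x y : B) : twisted x (c *: y) = c *: twisted x y.
Proof. by rewrite /twisted wf_mulZr wf_mulZl scalerBr. Qed.

Lemma twisted_scale_i (x y : B) :
  twisted ('i%C *: x) y = 'i%C *: (x ** y + y ** star x).
Proof.
by rewrite /twisted wf_starZ conj_i wf_mulZl wf_mulZr scaleNr opprK scalerDr.
Qed.

Lemma multiplier_comp (S T : B -> B) :
  multiplier S -> multiplier T -> multiplier (S \o T).
Proof.
case=> SD SZ SL SR [TD TZ TL TR]; split=> /= [x y|c x|x y|x y].
- by rewrite TD SD.
- by rewrite TZ SZ.
- by rewrite TL SL.
- by rewrite TR SR.
Qed.

Lemma multiplierN (T : B -> B) : multiplier T -> forall x, T (- x) = - T x.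
Proof. by case=> _ TZ _ _ x; rewrite -scaleN1r TZ scaleN1r. Qed.

Lemma eigen_ideal (T : B -> B) (k : CC) :
  multiplier T -> ideal (fun x => T x = k *: x).
Proof.
case=> TD TZ TL TR; split; last split; last split.
- by have := TZ 0 0; rewrite !scale0r scaler0.
- by move=> a b ha hb; rewrite TD ha hb scalerDr.
- by move=> c a ha; rewrite TZ ha !scalerA mulrC.
- by move=> a x ha; rewrite TL TR ha wf_mulZr wf_mulZl.
Qed.

Lemma eigen_orthogonal (T : B -> B) (k l : CC) (a b : B) :
  multiplier T -> k != l -> T a = k *: a -> T b = l *: b -> a ** b = 0.
Proof.
case=> _ _ TL TR kl ha hb.
have : (k - l) *: (a ** b) = 0.
  by rewrite scalerBl -wf_mulZl -wf_mulZr -ha -hb -TL -TR subrr.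
by move/eqP; rewrite scaler_eq0 subr_eq0 (negbTE kl) => /eqP.
Qed.

(* Dichotomy: in the prime algebra B, a multiplier whose square is k^2 is
   either k or -k: k x + T x and k x - T x are eigenvectors for k and -k
   (distinct, as k != 0), and one of the two eigen-ideals vanishes. *)
Lemma multiplier_dichotomy (T : B -> B) (k : CC) :
  multiplier T -> k != 0 -> (forall x, T (T x) = (k * k) *: x) ->
  (forall x, T x = k *: x) \/ (forall x, T x = - k *: x).
Proof.
move=> Tm k0 TT; have [TD TZ _ _] := Tm.
have Tk x : T (k *: x + T x) = k *: (k *: x + T x).
  by rewrite TD TZ TT scalerDr scalerA addrC.
have TNk x : T (k *: x - T x) = - k *: (k *: x - T x).
  by rewrite TD TZ (multiplierN Tm) TT scalerBr !scaleNr scalerA opprK addrC.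
have [Ik0|INk0] := wf_prime (eigen_ideal k Tm) (eigen_ideal (- k) Tm)
  (fun a b => eigen_orthogonal Tm (neq_opp k0)).
- right=> x; apply/eqP; rewrite scaleNr -addr_eq0 addrC.
  by apply/eqP/Ik0/Tk.
- left=> x; apply/esym/eqP; rewrite -subr_eq0.
  by apply/eqP/INk0/TNk.
Qed.

(* A linear map intertwining the twisted commutator is a multiplier: comparing
   the intertwining relation for x and for i x determines Psi (x y) and
   Psi (y x^* ) separately by polarization. *)
Lemma intertwiner_multiplier (Psi : B -> B) :
  (forall x y, Psi (x + y) = Psi x + Psi y) ->
  (forall (c : CC) x, Psi (c *: x) = c *: Psi x) ->
  (forall x y, Psi (twisted x y) = twisted x (Psi y)) ->
  multiplier Psi.
Proof.
move=> PD PZ Ptw.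
have PB x y : Psi (x - y) = Psi x - Psi y.
  by rewrite PD -scaleN1r PZ scaleN1r.
have sum_rel x y : Psi (x ** y) + Psi (y ** star x) = x ** Psi y + Psi y ** star x.
  apply: (scalerI i_neq0); rewrite -PD -PZ -!twisted_scale_i.
  exact: Ptw.
have diff_rel x y : Psi (x ** y) - Psi (y ** star x) = x ** Psi y - Psi y ** star x.
  by rewrite -PB; exact: Ptw.
have left_rel x y : Psi (x ** y) = x ** Psi y.
  exact: polarize (diff_rel x y) (sum_rel x y).
have right_rel y x : Psi (y ** x) = Psi y ** x.
  rewrite -[x]wf_starK.
  apply: (polarize (Q := - Psi (star x ** y)) (b := - (star x ** Psi y))).
  - by rewrite !opprK addrC sum_rel addrC.
  - by rewrite -opprB diff_rel opprB.
by split.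
Qed.

End Multipliers.

Section TwistedCommutatorMaps.
Variables A B : AltWFactor.
Variable Phi : A -> B.
Hypothesis Phi_twisted : forall a b, Phi (twisted a b) = twisted (Phi a) (Phi b).
Hypothesis Phi_onto : forall Y : B, exists a, Phi a = Y.

Lemma twisted_half_i (a : A) : twisted (('i%C / 2) *: wf_one A) a = 'i%C *: a.
Proof.
have conj_half_i : ('i%C / 2 : CC) - Num.conj ('i%C / 2) = 'i%C.
  by rewrite rmorphM fmorphV /= conj_i rmorph_nat; field.
have star1 : wf_star (wf_one A) = wf_one A.
  have := congr1 (@wf_star A) (wf_mul1r (wf_star (wf_one A))).
  by rewrite wf_starM !wf_starK wf_mul1r.
rewrite /twisted wf_starZ star1 wf_mulZl wf_mulZr wf_mul1l wf_mul1r.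
by rewrite -scalerBl conj_half_i.
Qed.

Definition Psi : B -> B := twisted (Phi (('i%C / 2) *: wf_one A)).

Lemma Phi_scale_i (a : A) : Phi ('i%C *: a) = Psi (Phi a).
Proof. by rewrite -twisted_half_i Phi_twisted. Qed.

Lemma Psi_multiplier : multiplier Psi.
Proof.
apply: intertwiner_multiplier => [x y|c x|X Y]; first exact: twistedDr.
  exact: twistedZr.
have [a <-] := Phi_onto X; have [b <-] := Phi_onto Y.
by rewrite -Phi_twisted -!Phi_scale_i -twistedZr Phi_twisted.
Qed.

(* Psi applied four times is Phi of multiplication by i^4 = 1. *)
Lemma Psi4 (Y : B) : Psi (Psi (Psi (Psi Y))) = Y.
Proof.
have [a <-] := Phi_onto Y; rewrite -!Phi_scale_i !scalerA -mulrA !i_mul_i.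
by rewrite mulrNN mulr1 scale1r.
Qed.

End TwistedCommutatorMaps.

Theorem lemma2p9 (A B : AltWFactor) (p : A)
  (hp : is_projection p) (hp1 : p <> wf_one A)
  (Phi : A -> B) (hbij : bijective Phi)
  (hPhi : forall a b : A,
     Phi (wf_mul a b - wf_mul b (wf_star a)) =
     wf_mul (Phi a) (Phi b) - wf_mul (Phi b) (wf_star (Phi a))) :
  (forall a : A, Phi ('i%C *: a) = 'i%C *: Phi a) \/
  (forall a : A, Phi ('i%C *: a) = - ('i%C *: Phi a)).
Proof.
have Phi_onto (Y : B) : exists a, Phi a = Y.
  by case: hbij => g _ gK; exists (g Y).
have Phi_i := Phi_scale_i hPhi.
have Psi_m := Psi_multiplier hPhi Phi_onto.
have Psi2_sq (Y : B) : Psi Phi (Psi Phi (Psi Phi (Psi Phi Y))) = (1 * 1) *: Y.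
  by rewrite (Psi4 hPhi Phi_onto) mulr1 scale1r.
have [Psi2_id|Psi2_opp] :=
  multiplier_dichotomy (multiplier_comp Psi_m Psi_m) (oner_neq0 CC) Psi2_sq.
- (* Psi o Psi = 1 makes Phi even, so B is trivial. *)
  have Phi_even (a : A) : Phi (- a) = Phi a.
    rewrite -scaleN1r -i_mul_i -scalerA !Phi_i.
    by have := Psi2_id (Phi a); rewrite scale1r /= => ->.
  have B0 := even_bijection_trivial hbij Phi_even.
  by left=> a; rewrite (B0 (Phi _)) (B0 (Phi a)) scaler0.
- have Psi_sq (Y : B) : Psi Phi (Psi Phi Y) = ('i%C * 'i%C) *: Y.
    by have := Psi2_opp Y; rewrite /= i_mul_i.
  have [Psi_i|Psi_Ni] := multiplier_dichotomy Psi_m i_neq0 Psi_sq.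
  + by left=> a; rewrite Phi_i.
  + by right=> a; rewrite Phi_i Psi_Ni scaleNr.
Qed.
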